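(* Let $\varphi=\frac{1+\sqrt5}{2}$, $F_n=\frac{\varphi^n-(-1/\varphi)^n}{\varphi+1/\varphi}$, $F_0!=1$, $F_n!=F_1\cdots F_n$. For commuting variables $x,y$ and $n\ge1$ let $(x+y)_F^n=\prod_{k=0}^{n-1}(x+(-1)^k\varphi^{n-1-2k}y)$, $(x+y)_F^0=1$, and let $(x-y)_F^n$ denote the same expression with $y$ replaced by $-y$. Let $D_F^x$ (resp. $D_F^y$) be the Golden derivative in $x$ (resp. $y$), acting on polynomials as the linear operator with $D_F^x x^m=F_mx^{m-1}$ ($m\ge1$), $D_F^x1=0$, other variables treated as constants (for nonzero argument this coincides with $D_F^xf(x)=\frac{f(\varphi x)-f(-x/\varphi)}{(\varphi+1/\varphi)x}$). Then for every $n\ge1$: $$D_F^x(x+y)_F^n=F_n(x+y)_F^{n-1},\qquad D_F^y(x+y)_F^n=F_n(x-y)_F^{n-1},$$ and for every $k\ge0$, $$(D_F^y)^{2k}(x+y)_F^{2k}=(-1)^kF_{2k}!,\qquad (D_F^y)^{2k+1}(x+y)_F^{2k+1}=(-1)^kF_{2k+1}!.$$ *)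

(* Bivariate polynomials in commuting x, y are modelled as
   {poly {poly R}}: the outer variable is x ('X), the inner one is y ('X%:P). *)
From HB Require Import structures.
From mathcomp Require Import all_boot all_order all_algebra.
Set Implicit Arguments. Unset Strict Implicit. Unset Printing Implicit Defensive.
Import Order.TTheory GRing.Theory Num.Theory.
Local Open Scope ring_scope.

Section Golden.
Variable R : rcfType.

Definition phi : R := (1 + Num.sqrt 5) / 2.

Definition Fib (n : nat) : R :=
  (phi ^+ n - (- phi^-1) ^+ n) / (phi + phi^-1).

Definition Ffact (n : nat) : R := \prod_(1 <= i < n.+1) Fib i.

Definition xvar : {poly {poly R}} := 'X.
Definition yvar : {poly {poly R}} := ('X : {poly R})%:P.
Definition cst (c : R) : {poly {poly R}} := c%:P%:P.

Definition golden_binom (s : R) (n : nat) : {poly {poly R}} :=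
  \prod_(k < n)
     (xvar + cst (s * (-1) ^+ k * phi ^ ((n.-1)%:Z - (2 * k)%:Z)) * yvar).

Definition xpyF (n : nat) := golden_binom 1 n.
Definition xmyF (n : nat) := golden_binom (-1) n.

Definition DF1 (q : {poly R}) : {poly R} :=
  \poly_(i < size q) (Fib i.+1 * q`_i.+1).

Definition DFx (p : {poly {poly R}}) : {poly {poly R}} :=
  \poly_(i < size p) ((Fib i.+1)%:P * p`_i.+1).

Definition DFy (p : {poly {poly R}}) : {poly {poly R}} :=
  map_poly DF1 p.

End Golden.

From HB Require Import structures.
From mathcomp Require Import all_boot all_order all_algebra.
From mathcomp Require Import ring.
Import Order.TTheory GRing.Theory Num.Theory.
Local Open Scope ring_scope.

(* Writing psi := -1/phi, Binet's formula says that (phi - psi) x times the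
   Golden derivative of p is the difference of dilations p(phi x) - p(psi x).
   Multiplication by the nonzero (phi - psi) x is injective, so it suffices to
   compute these dilations.  A dilation acts factorwise on (x + s y)_F^n, and
   rescaling the exponents of phi in the factors shows that p(phi x) and
   p(psi x) are phi^n (x + s y)_F^(n-1) and psi^n (x + s y)_F^(n-1) times one
   extra linear factor each; the y-parts of the two extra factors cancel,
   leaving F_n x (phi - psi) (x + s y)_F^(n-1).  In y the same argument gives
   s F_n (x - s y)_F^(n-1), and iterating yields the Fibonacci factorials with
   the sign s^n (-1)^(n/2). *)

Section WeightedDerivative.
Variables (A : comNzRingType) (w : nat -> A).

Definition wderiv (p : {poly A}) : {poly A} :=
  \poly_(i < size p) (w i.+1 * p`_i.+1).

Lemma comp_poly_scaleX (a : A) (p : {poly A}) :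
  p \Po (a *: 'X) = \poly_(i < size p) (p`_i * a ^+ i).
Proof.
by rewrite comp_polyE poly_def; apply: eq_bigr => i _; rewrite exprZn scalerA.
Qed.

Lemma wderiv_mulX_dilate (u v c : A) :
    (forall n, w n * c = u ^+ n - v ^+ n) ->
  forall p, wderiv p * ('X * c%:P) = (p \Po (u *: 'X)) - (p \Po (v *: 'X)).
Proof.
move=> wE p; rewrite !comp_poly_scaleX; apply/polyP => j.
rewrite mulrA coefMC coefMX coefB !coef_poly.
case: j => [|j] /=; first by rewrite subrr mul0r.
case: (ltnP j.+1 (size p)) => [ltjp | lepj]; first by rewrite (ltnW ltjp) mulrAC wE; ring.
by rewrite (nth_default 0 lepj) !mulr0 !if_same mul0r subrr.
Qed.

End WeightedDerivative.

Section GoldenBinomial.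
Variable R : rcfType.

Local Notation phi := (phi R).
Local Notation psi := (- phi^-1).
Local Notation Fib := (Fib R).
Local Notation x := (xvar R).
Local Notation y := (yvar R).
Local Notation dilx c := (comp_poly (c%:P *: 'X)).
Local Notation dily c := (map_poly (comp_poly (c *: 'X))).

Lemma phi_gt0 : 0 < phi.
Proof. by rewrite /phi divr_gt0 // ltr_wpDr ?sqrtr_ge0. Qed.

Lemma phi_neq0 : phi != 0.
Proof. by rewrite gt_eqF ?phi_gt0. Qed.

Lemma phiDV_neq0 : phi + phi^-1 != 0.
Proof. by rewrite gt_eqF // addr_gt0 ?invr_gt0 ?phi_gt0. Qed.

Lemma FibE n : Fib n * (phi + phi^-1) = phi ^+ n - psi ^+ n.
Proof. by rewrite /Fib divfK ?phiDV_neq0. Qed.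

Lemma cstM (a b : R) : cst (a * b) = cst a * cst b.
Proof. by rewrite /cst !polyCM. Qed.

Lemma cst1 : cst (1 : R) = 1.
Proof. by rewrite /cst !polyC1. Qed.

Lemma cstX (a : R) n : cst (a ^+ n) = cst a ^+ n.
Proof. by rewrite /cst !rmorphXn. Qed.

Lemma cst_neq0 (a : R) : a != 0 -> cst a != 0.
Proof. by rewrite /cst !polyC_eq0. Qed.

Lemma DFx_mulx_dilate p :
  DFx p * (x * cst (phi + phi^-1)) = dilx phi p - dilx psi p.
Proof.
apply: (@wderiv_mulX_dilate _ (fun i => (Fib i)%:P)) => n.
by rewrite -rmorphM FibE rmorphB !rmorphXn.
Qed.

Lemma DF1_mulX_dilate q :
  DF1 q * ('X * (phi + phi^-1)%:P) = (q \Po (phi *: 'X)) - (q \Po (psi *: 'X)).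
Proof. exact: wderiv_mulX_dilate FibE q. Qed.

Lemma DF1_0 : DF1 (0 : {poly R}) = 0.
Proof. by rewrite /DF1 size_poly0 poly_def big_ord0. Qed.

Lemma DFy_muly_dilate p :
  DFy p * (y * cst (phi + phi^-1)) = dily phi p - dily psi p.
Proof.
apply/polyP => j; rewrite /yvar /cst -polyCM coefMC coefB.
by rewrite /DFy coef_map_id0 ?DF1_0 // !coef_map /= DF1_mulX_dilate.
Qed.

Lemma x_phiDV_neq0 : x * cst (phi + phi^-1) != 0.
Proof. by rewrite mulf_neq0 ?cst_neq0 ?phiDV_neq0 // polyX_eq0. Qed.

Lemma y_phiDV_neq0 : y * cst (phi + phi^-1) != 0.
Proof. by rewrite mulf_neq0 ?cst_neq0 ?phiDV_neq0 // polyC_eq0 polyX_eq0. Qed.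

Lemma dily_cst (c a : R) : dily c (cst a) = cst a.
Proof. by rewrite /cst map_polyC /= comp_polyC. Qed.

Lemma DFy_cstM (a : R) p : DFy (cst a * p) = cst a * DFy p.
Proof.
apply: (mulIf y_phiDV_neq0).
by rewrite DFy_muly_dilate -mulrA DFy_muly_dilate !rmorphM /= !dily_cst mulrBr.
Qed.

Lemma iter_DFy_cstM m (a : R) p :
  iter m (@DFy R) (cst a * p) = cst a * iter m (@DFy R) p.
Proof. by elim: m => //= m ->; rewrite DFy_cstM. Qed.

Definition linxy (a b : R) := cst a * x + cst b * y.

Lemma cstM_linxy (c a b : R) : cst c * linxy a b = linxy (c * a) (c * b).
Proof. by rewrite /linxy !cstM; ring. Qed.

Lemma linxyB (p q a b a' b' : R) :
  cst p * linxy a b - cst q * linxy a' b' = linxy (p * a - q * a') (p * b - q * b').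
Proof. by rewrite /linxy /cst; ring. Qed.

Lemma linxy_y0 (a : R) : linxy a 0 = cst a * x.
Proof. by rewrite /linxy /cst !polyC0 mul0r addr0. Qed.

Lemma linxy_x0 (b : R) : linxy 0 b = cst b * y.
Proof. by rewrite /linxy /cst !polyC0 mul0r add0r. Qed.

Lemma dilx_linxy (c a b : R) : dilx c (linxy a b) = linxy (a * c) b.
Proof.
rewrite /linxy comp_polyD !comp_polyM /cst (comp_polyC a%:P) (comp_polyC b%:P).
by rewrite /xvar comp_polyX /yvar comp_polyC -mul_polyC mulrA -!polyCM.
Qed.

Lemma dily_linxy (c a b : R) : dily c (linxy a b) = linxy a (b * c).
Proof.
rewrite /linxy !rmorphD !rmorphM /= /cst !map_polyC /= !comp_polyC.
by rewrite /xvar map_polyX /yvar comp_polyX -mul_polyC !polyCM; ring.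
Qed.

Definition gcoef (s : R) (n k : nat) := s * (-1) ^+ k * phi ^ ((n.-1)%:Z - (2 * k)%:Z).

Lemma golden_binomE (s : R) n : golden_binom s n = \prod_(k < n) linxy 1 (gcoef s n k).
Proof. by apply: eq_bigr => k _; rewrite /linxy cst1 mul1r. Qed.

Lemma gcoefS (s : R) n k : (k < n)%N -> gcoef s n.+1 k = phi * gcoef s n k.
Proof.
case: n => // n _; rewrite /gcoef /=.
have -> : n.+1%:Z - (2 * k)%:Z = (n%:Z - (2 * k)%:Z) + 1 by rewrite -addn1 PoszD; ring.
by rewrite expfzDr ?phi_neq0 // expr1z; ring.
Qed.

Lemma gcoefSS (s : R) n k : (k < n)%N -> gcoef s n.+1 k.+1 = psi * gcoef s n k.
Proof.
case: n => // n _; rewrite /gcoef /=.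
have -> : n.+1%:Z - (2 * k.+1)%:Z = (n%:Z - (2 * k)%:Z) + (-1).
  by rewrite mulnS -addn1 !PoszD; ring.
by rewrite expfzDr ?phi_neq0 // exprN1 exprS; ring.
Qed.

Lemma gcoef_first (s : R) n : gcoef s n.+1 0 = s * phi ^+ n.
Proof. by rewrite /gcoef /= muln0 subr0 -exprnP; ring. Qed.

Lemma gcoef_last (s : R) n : gcoef s n.+1 n = s * psi ^+ n.
Proof.
rewrite /gcoef /=.
have -> : n%:Z - (2 * n)%:Z = - n%:Z by rewrite mulSn mul1n PoszD; ring.
by rewrite -exprnN (exprNn phi^-1) exprVn; ring.
Qed.

(* The factors with k < n absorb phi and those with k > 0 absorb psi, each
   turning into a factor of (x + s y)_F^(n-1). *)
Lemma dilx_phi_golden_binom (s : R) n :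
  dilx phi (golden_binom s n.+1)
  = cst (phi ^+ n) * golden_binom s n * linxy phi (gcoef s n.+1 n).
Proof.
rewrite golden_binomE rmorph_prod big_ord_recr /= golden_binomE dilx_linxy mul1r.
congr (_ * _); rewrite cstX -[n in cst phi ^+ n]card_ord -prodr_const -big_split.
by apply: eq_bigr => k _ /=; rewrite dilx_linxy cstM_linxy (gcoefS _ _ _ (ltn_ord k)) mul1r mulr1.
Qed.

Lemma dilx_psi_golden_binom (s : R) n :
  dilx psi (golden_binom s n.+1)
  = linxy psi (gcoef s n.+1 0) * (cst (psi ^+ n) * golden_binom s n).
Proof.
rewrite golden_binomE rmorph_prod big_ord_recl /= golden_binomE dilx_linxy mul1r.
congr (_ * _); rewrite cstX -[n in cst psi ^+ n]card_ord -prodr_const -big_split.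
by apply: eq_bigr => k _ /=; rewrite dilx_linxy cstM_linxy (gcoefSS _ _ _ (ltn_ord k)) mul1r mulr1.
Qed.

Lemma dily_phi_golden_binom (s : R) n :
  dily phi (golden_binom s n.+1)
  = linxy 1 (gcoef s n.+1 0 * phi) * golden_binom (- s) n.
Proof.
rewrite golden_binomE rmorph_prod big_ord_recl /= golden_binomE dily_linxy.
congr (_ * _); apply: eq_bigr => k _; rewrite dily_linxy gcoefSS //.
by rewrite /gcoef; congr linxy; field; rewrite phi_neq0.
Qed.

Lemma dily_psi_golden_binom (s : R) n :
  dily psi (golden_binom s n.+1)
  = golden_binom (- s) n * linxy 1 (gcoef s n.+1 n * psi).
Proof.
rewrite golden_binomE rmorph_prod big_ord_recr /= golden_binomE dily_linxy.
congr (_ * _); apply: eq_bigr => k _; rewrite dily_linxy gcoefS //.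
by rewrite /gcoef; congr linxy; field; rewrite phi_neq0.
Qed.

Lemma DFx_golden_binom (s : R) n :
  DFx (golden_binom s n.+1) = cst (Fib n.+1) * golden_binom s n.
Proof.
apply: (mulIf x_phiDV_neq0).
rewrite DFx_mulx_dilate dilx_phi_golden_binom dilx_psi_golden_binom.
have -> : forall (G A B : {poly {poly R}}) (a b : R),
    cst a * G * A - B * (cst b * G) = G * (cst a * A - cst b * B).
  by move=> *; ring.
rewrite linxyB gcoef_first gcoef_last.
have -> : phi ^+ n * (s * psi ^+ n) - psi ^+ n * (s * phi ^+ n) = 0 by ring.
by rewrite linxy_y0 -!exprSr -FibE cstM; ring.
Qed.

Lemma DFy_golden_binom (s : R) n :
  DFy (golden_binom s n.+1) = cst (s * Fib n.+1) * golden_binom (- s) n.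
Proof.
apply: (mulIf y_phiDV_neq0).
rewrite DFy_muly_dilate dily_phi_golden_binom dily_psi_golden_binom.
have -> : forall (G A B : {poly {poly R}}),
    B * G - G * A = G * (cst 1 * B - cst 1 * A).
  by move=> *; rewrite cst1; ring.
rewrite linxyB !mul1r subrr linxy_x0 gcoef_first gcoef_last.
have -> : s * phi ^+ n * phi - s * psi ^+ n * psi = s * Fib n.+1 * (phi + phi^-1).
  by rewrite -[RHS]mulrA FibE !exprSr; ring.
by rewrite !cstM; ring.
Qed.

Lemma iter_DFy_golden_binom m (s : R) :
  iter m (@DFy R) (golden_binom s m) = cst (s ^+ m * (-1) ^+ m./2 * Ffact R m).
Proof.
elim: m s => [|m IHm] s.
  by rewrite /golden_binom big_ord0 /Ffact big_geq // !expr0 !mul1r cst1.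
rewrite iterSr DFy_golden_binom iter_DFy_cstM IHm -cstM; congr cst.
have signS : (-1) ^+ m.+1./2 = (-1) ^+ m * (-1) ^+ m./2 :> R.
  rewrite -exprD -signr_odd -[RHS]signr_odd; congr (_ ^+ _).
  by rewrite /= uphalf_half !oddD oddb.
by rewrite signS /Ffact (big_nat_recr m.+1) //= (exprNn s) exprS; ring.
Qed.

End GoldenBinomial.

Theorem mainTheorem11 (R : rcfType) :
  (forall n : nat, (1 <= n)%N ->
     DFx (xpyF R n) = cst (Fib R n) * xpyF R n.-1 /\
     DFy (xpyF R n) = cst (Fib R n) * xmyF R n.-1) /\
  (forall k : nat,
     iter (2 * k) (@DFy R) (xpyF R (2 * k)) = cst ((-1) ^+ k * Ffact R (2 * k)) /\
     iter (2 * k).+1 (@DFy R) (xpyF R (2 * k).+1)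
       = cst ((-1) ^+ k * Ffact R (2 * k).+1)).
Proof.
split=> [[|n] // _ | k].
  by rewrite /xpyF /xmyF DFx_golden_binom DFy_golden_binom mul1r.
rewrite /xpyF !iter_DFy_golden_binom !expr1n !mul1r.
have half_double : (2 * k)./2 = k by rewrite mul2n doubleK.
by rewrite /= uphalf_half half_double mul2n odd_double.
Qed.
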